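(* Let $\psi$ be a formula not containing $\mathbin{\&}$, let $I$ be an interpretation that interprets equality as identity, and let $\sigma$ be an assignment with $\sigma,I\models_P\psi$ and $MFA(\sigma)$. Then there exists an assignment $\sigma^\ddagger\subseteq\sigma$ such that $\sigma^\ddagger,I\models_S\psi^S\mathbin{\&}SFA(\psi)$.
   Context: Fix a set $\mathcal X$ of synchronisation variables and, for each $x\in\mathcal X$, a distinct data flow variable $\hat x$; $\hat{\mathcal X}=\{\hat x: x\in\mathcal X\}$. Fix function symbols $\mathcal F$ and predicate symbols $\mathcal P$ (with arities), $\mathcal P$ containing binary equality $=$; $\mathcal D$ is the set of ground terms over $\mathcal F$. Formulas: $\psi ::= \top \mid x \mid \psi_1\wedge\psi_2 \mid \psi_1\mathbin{\&}\psi_2 \mid \neg\psi \mid p(t_1,\dots,t_n)$, terms $t ::= \hat x \mid f(t_1,\dots,t_n)$. $\mathrm{fv}(\psi)$ is the set of variables of $\mathcal X\cup\hat{\mathcal X}$ occurring in $\psi$; $V(\psi)=\{x\in\mathcal X: x\in\mathrm{fv}(\psi)\text{ or }\hat x\in\mathrm{fv}(\psi)\}$. An assignment $\sigma$ is a partial map sending $x\in\mathcal X$ to $\{\mathrm{true},\mathrm{false}\}$ and $\hat x$ to $\mathcal D$; $\sigma\subseteq\sigma'$ means $\sigma'$ extends $\sigma$. An interpretation $I$ is a partial map from pairs $(p,(d_1,\dots,d_n))$ ($d_i\in\mathcal D$) to $\{\mathrm{true},\mathrm{false}\}$; it interprets equality as identity if $I(=,(d,d'))$ is $\mathrm{true}$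 when $d=d'$ and $\mathrm{false}$ otherwise. $\mathrm{Val}_\sigma(\hat x)=\sigma(\hat x)$, $\mathrm{Val}_\sigma(f(\vec t))=f(\mathrm{Val}_\sigma(t_1),\dots)$, undefined if an argument is. Partial satisfaction $\models_P$ / dissatisfaction $\mathrel{=\!\!|}_P$ (for $\mathbin{\&}$-free formulas): $\models_P\top$ always; $\models_P x$ iff $\sigma(x)=\mathrm{true}$; $\models_P\psi_1\wedge\psi_2$ iff both; $\models_P\neg\psi$ iff $\mathrel{=\!\!|}_P\psi$; $\models_P p(\vec t)$ iff all $\mathrm{Val}_\sigma(t_i)$ defined and $I(p,(\mathrm{Val}_\sigma(t_i))_i)=\mathrm{true}$; $\mathrel{=\!\!|}_P\top$ never; $\mathrel{=\!\!|}_P x$ iff $\sigma(x)=\mathrm{false}$; $\mathrel{=\!\!|}_P\psi_1\wedge\psi_2$ iff one conjunct is dissatisfied; $\mathrel{=\!\!|}_P\neg\psi$ iff $\models_P\psi$; $\mathrel{=\!\!|}_P p(\vec t)$ iff all values defined and $I(\dots)=\mathrm{false}$. $MFA(\sigma)$: for all $x\in\mathcal X$, $\sigma(\hat x)$ defined implies $\sigma(x)=\mathrm{true}$. Simple satisfaction $\models_S$ / dissatisfaction $\mathrel{=\!\!|}_S$ ($\sigma_1\frown\sigma_2$ means they agree on their common domain): $\sigma,I\models_S\top$ iff $\sigma=\emptyset$; $\models_S x$ iff $\sigma=\{x\mapsto\mathrm{true}\}$; $\models_S\psi_1\wedge\psi_2$ iff $\sigma=\sigma_1\cup\sigma_2$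 with $\sigma_1\frown\sigma_2$, $\sigma_i,I\models_S\psi_i$; $\models_S\psi_1\mathbin{\&}\psi_2$ iff $\sigma$ satisfies both; $\models_S\neg\psi$ iff $\mathrel{=\!\!|}_S\psi$; $\models_S p(\vec t)$ iff all values defined, $I(p,\dots)=\mathrm{true}$ and $\mathrm{dom}(\sigma)=\mathrm{fv}(p(\vec t))$. $\mathrel{=\!\!|}_S\top$ never; $\mathrel{=\!\!|}_S x$ iff $\sigma=\{x\mapsto\mathrm{false}\}$; $\sigma,I\mathrel{=\!\!|}_S\psi_1\wedge\psi_2$ iff for all $\sigma_1\frown\sigma_2$ with $\sigma=\sigma_1\cup\sigma_2$, $\sigma_1,I\mathrel{=\!\!|}_S\psi_1$ or $\sigma_2,I\mathrel{=\!\!|}_S\psi_2$; $\mathrel{=\!\!|}_S\psi_1\mathbin{\&}\psi_2$ iff $\sigma$ dissatisfies one; $\mathrel{=\!\!|}_S\neg\psi$ iff $\models_S\psi$; $\mathrel{=\!\!|}_S p(\vec t)$ iff all values defined, $I(\dots)=\mathrm{false}$ and $\mathrm{dom}(\sigma)=\mathrm{fv}(p(\vec t))$. $\psi_1\oplus\psi_2:=\neg(\neg\psi_1\mathbin{\&}\neg\psi_2)$; $SFA(x):=\top\oplus x\oplus\neg x\oplus(x\wedge(\hat x=\hat x))\oplus(\hat x=\hat x)$; $SFA(\psi):=\bigwedge_{x\in V(\psi)}SFA(x)$ (overlapping conjunction; $\top$ if $V(\psi)=\emptyset$). A subformula occurrence is in a negative position if it lies within the scope of an odd number of negations, otherwise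 positive; $\psi^S$ is obtained from $\psi$ by replacing every $\wedge$ in a negative position by $\mathbin{\&}$. *)

From mathcomp Require Import ssreflect ssrfun ssrbool eqtype ssrnat seq.
Set Implicit Arguments. Unset Strict Implicit. Unset Printing Implicit Defensive.

Section Logic.
(* X : synchronisation variables; the data flow variable \hat x is [x] used
   inside a term ([TVar x]).  F : function symbols, P : predicate symbols. *)
Variables (X : eqType) (F P : Type).

Inductive term : Type :=
| TVar : X -> term
| TApp : F -> list term -> term.

Inductive formula : Type :=
| FTop : formula
| FSync : X -> formula
| FAnd : formula -> formula -> formula
| FAmp : formula -> formula -> formula
| FNot : formula -> formula
| FPred : P -> list term -> formula.

(* ground terms over F : the data domain D *)
Inductive gterm : Type := GApp : F -> list gterm -> gterm.

Variables (arF : F -> nat) (arP : P -> nat).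

Fixpoint wf_term (t : term) : Prop :=
  match t with
  | TVar _ => True
  | TApp f ts => size ts = arF f /\
      (fix wfl (l : list term) : Prop :=
         match l with [::] => True | t :: l => wf_term t /\ wfl l end) ts
  end.

Fixpoint wf_terms (ts : list term) : Prop :=
  match ts with [::] => True | t :: l => wf_term t /\ wf_terms l end.

Fixpoint wf_formula (psi : formula) : Prop :=
  match psi with
  | FTop | FSync _ => True
  | FAnd a b | FAmp a b => wf_formula a /\ wf_formula b
  | FNot a => wf_formula a
  | FPred p ts => size ts = arP p /\ wf_terms ts
  end.

Fixpoint wf_gterm (d : gterm) : Prop :=
  match d with
  | GApp f ds => size ds = arF f /\
      (fix wfl (l : list gterm) : Prop :=
         match l with [::] => True | d :: l => wf_gterm d /\ wfl l end) ds
  end.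

Fixpoint amp_free (psi : formula) : Prop :=
  match psi with
  | FTop | FSync _ | FPred _ _ => True
  | FAnd a b => amp_free a /\ amp_free b
  | FAmp _ _ => False
  | FNot a => amp_free a
  end.

Fixpoint tvars (t : term) : list X :=
  match t with
  | TVar x => [:: x]
  | TApp _ ts =>
      (fix tvl (l : list term) : list X :=
         match l with [::] => [::] | t :: l => tvars t ++ tvl l end) ts
  end.

Definition tsvars (ts : list term) : list X := flatten (map tvars ts).

(* V(psi) as a list (with possible repetitions):
   x with x in fv(psi) or \hat x in fv(psi) *)
Fixpoint Vlist (psi : formula) : list X :=
  match psi with
  | FTop => [::]
  | FSync x => [:: x]
  | FAnd a b | FAmp a b => Vlist a ++ Vlist b
  | FNot a => Vlist a
  | FPred _ ts => tsvars ts
  end.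

(* assignments: partial maps x |-> bool and \hat x |-> D *)
Record assignment := Assign {
  sb : X -> option bool;
  sd : X -> option gterm
}.

Definition asub (s1 s2 : assignment) : Prop :=
  (forall x b, sb s1 x = Some b -> sb s2 x = Some b) /\
  (forall x d, sd s1 x = Some d -> sd s2 x = Some d).

Definition compat (s1 s2 : assignment) : Prop :=
  (forall x b1 b2, sb s1 x = Some b1 -> sb s2 x = Some b2 -> b1 = b2) /\
  (forall x d1 d2, sd s1 x = Some d1 -> sd s2 x = Some d2 -> d1 = d2).

Definition oplus {A} (o1 o2 : option A) : option A :=
  match o1 with Some a => Some a | None => o2 end.

Definition aunion (s1 s2 : assignment) : assignment :=
  Assign (fun x => oplus (sb s1 x) (sb s2 x)) (fun x => oplus (sd s1 x) (sd s2 x)).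

Definition aeq (s1 s2 : assignment) : Prop :=
  (forall x, sb s1 x = sb s2 x) /\ (forall x, sd s1 x = sd s2 x).

Definition MFA (s : assignment) : Prop :=
  forall x, sd s x <> None -> sb s x = Some true.

Definition interp := P -> list gterm -> option bool.

Variable eqsym : P.

Definition eq_identity (I : interp) : Prop :=
  forall d d', I eqsym [:: d; d'] = Some true /\ d = d' \/
               I eqsym [:: d; d'] = Some false /\ d <> d'.

Fixpoint Val (s : assignment) (t : term) : option gterm :=
  match t with
  | TVar x => sd s x
  | TApp f ts =>
      option_map (GApp f)
        ((fix vl (l : list term) : option (list gterm) :=
            match l with
            | [::] => Some [::]
            | t :: l => match Val s t, vl l with
                        | Some d, Some ds => Some (d :: ds)
                        | _, _ => None
                        end
            end) ts)
  end.

Fixpoint Vals (s : assignment) (ts : list term) : option (list gterm) :=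
  match ts with
  | [::] => Some [::]
  | t :: l => match Val s t, Vals s l with
              | Some d, Some ds => Some (d :: ds)
              | _, _ => None
              end
  end.

Variable I : interp.

(* partial satisfaction / dissatisfaction (for &-free formulas;
   the & case is never used) *)
Fixpoint satP (s : assignment) (psi : formula) : Prop :=
  match psi with
  | FTop => True
  | FSync x => sb s x = Some true
  | FAnd a b => satP s a /\ satP s b
  | FAmp _ _ => False
  | FNot a => dsatP s a
  | FPred p ts => exists ds, Vals s ts = Some ds /\ I p ds = Some true
  end
with dsatP (s : assignment) (psi : formula) : Prop :=
  match psi with
  | FTop => False
  | FSync x => sb s x = Some false
  | FAnd a b => dsatP s a \/ dsatP s b
  | FAmp _ _ => False
  | FNot a => satP s a
  | FPred p ts => exists ds, Vals s ts = Some ds /\ I p ds = Some false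
  end.

Definition dom_is_fv (s : assignment) (ts : list term) : Prop :=
  (forall x, sb s x = None) /\
  (forall x, sd s x <> None <-> x \in tsvars ts).

Definition is_empty (s : assignment) : Prop :=
  (forall x, sb s x = None) /\ (forall x, sd s x = None).

Definition is_single (x : X) (b : bool) (s : assignment) : Prop :=
  (forall y, sb s y = (if y == x then Some b else None)) /\
  (forall y, sd s y = None).

Fixpoint satS (s : assignment) (psi : formula) : Prop :=
  match psi with
  | FTop => is_empty s
  | FSync x => is_single x true s
  | FAnd a b => exists s1 s2, compat s1 s2 /\ aeq s (aunion s1 s2) /\
                              satS s1 a /\ satS s2 b
  | FAmp a b => satS s a /\ satS s b
  | FNot a => dsatS s a
  | FPred p ts => (exists ds, Vals s ts = Some ds /\ I p ds = Some true) /\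
                  dom_is_fv s ts
  end
with dsatS (s : assignment) (psi : formula) : Prop :=
  match psi with
  | FTop => False
  | FSync x => is_single x false s
  | FAnd a b => forall s1 s2, compat s1 s2 -> aeq s (aunion s1 s2) ->
                              dsatS s1 a \/ dsatS s2 b
  | FAmp a b => dsatS s a \/ dsatS s b
  | FNot a => satS s a
  | FPred p ts => (exists ds, Vals s ts = Some ds /\ I p ds = Some false) /\
                  dom_is_fv s ts
  end.

End Logic.

Arguments FTop {X F P}.

Definition FOplus {X : eqType} {F P : Type} (a b : formula X F P) :=
  FNot (FAmp (FNot a) (FNot b)).

Definition FEqSelf {X : eqType} {F P : Type} (eqsym : P) (x : X) : formula X F P :=
  FPred eqsym [:: TVar F x; TVar F x].

Definition SFAx {X : eqType} {F P : Type} (eqsym : P) (x : X) : formula X F P :=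
  FOplus FTop (FOplus (FSync F P x) (FOplus (FNot (FSync F P x))
    (FOplus (FAnd (FSync F P x) (FEqSelf (F:=F) eqsym x)) (FEqSelf (F:=F) eqsym x)))).

Fixpoint bigAnd {X : eqType} {F P : Type} (l : list (formula X F P)) : formula X F P :=
  match l with
  | [::] => FTop
  | [:: a] => a
  | a :: l => FAnd a (bigAnd l)
  end.

Definition SFA {X : eqType} {F P : Type} (eqsym : P) (psi : formula X F P) : formula X F P :=
  bigAnd (map (SFAx (F:=F) eqsym) (undup (Vlist psi))).

(* psi^S : every /\ in a negative position replaced by &.
   [pos] = true iff the current position is positive. *)
Fixpoint toS {X : eqType} {F P : Type} (pos : bool) (psi : formula X F P) : formula X F P :=
  match psi with
  | FTop => FTop
  | FSync x => FSync F P x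
  | FAnd a b => if pos then FAnd (toS pos a) (toS pos b)
                else FAmp (toS pos a) (toS pos b)
  | FAmp a b => FAmp (toS pos a) (toS pos b)
  | FNot a => FNot (toS (~~ pos) a)
  | FPred p ts => FPred p ts
  end.

Definition psiS {X : eqType} {F P : Type} (psi : formula X F P) := toS true psi.

(* Induction on the &-free formula, simultaneously for satisfaction and
   dissatisfaction: a partially (dis)satisfying assignment is cut down to a
   sub-assignment living on V(psi).  An atom keeps just the data values it reads;
   a satisfied conjunction takes the union of the two pieces, compatible because
   both are sub-assignments of one assignment.  A dissatisfied conjunction only
   yields a piece for one conjunct, which is why it has to become & in psi^S.
   Restricted to a single variable x, the sub-assignment meets one of the five
   disjuncts of SFA(x) according to which of x and \hat x it defines; MFA excludes
   the only uncovered case, x false with \hat x defined. *)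
From mathcomp Require Import ssreflect ssrfun ssrbool eqtype ssrnat seq.

Set Implicit Arguments.
Unset Strict Implicit.
Unset Printing Implicit Defensive.

Section Terms.
Variables (X : eqType) (F : Type).
Implicit Types (s : assignment X F) (t : term X F) (ts : seq (term X F)).

Fixpoint term_ind_nested (Q : term X F -> Prop) (Hvar : forall x, Q (TVar F x))
  (Happ : forall f ts, foldr (fun t R => Q t /\ R) True ts -> Q (TApp f ts))
  t : Q t :=
  match t with
  | TVar x => Hvar x
  | TApp f ts => Happ f ts ((fix all_args l : foldr (fun t R => Q t /\ R) True l :=
      match l return foldr (fun t R => Q t /\ R) True l with
      | [::] => Logic.I
      | u :: l' => conj (term_ind_nested Hvar Happ u) (all_args l')
      end) ts)
  end.

Lemma Val_TApp s f ts : Val s (TApp f ts) = option_map (GApp f) (Vals s ts).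
Proof. by rewrite /=; congr option_map; elim: ts => //= t ts ->. Qed.

Lemma tvars_TApp f ts : tvars (TApp f ts) = tsvars ts.
Proof. by elim: ts => //= t ts ->. Qed.

Lemma mem_tsvars_cons x t ts :
  (x \in tsvars (t :: ts)) = (x \in tvars t) || (x \in tsvars ts).
Proof. by rewrite /tsvars /= mem_cat. Qed.

Lemma eq_Val s1 s2 t :
  {in tvars t, sd s1 =1 sd s2} -> Val s1 t = Val s2 t.
Proof.
elim/term_ind_nested: t => [x E | f ts IH E]; first by apply: E; rewrite inE.
rewrite !Val_TApp tvars_TApp in E *; congr option_map.
elim: ts IH E => //= t ts IHts [IHt /IHts {}IHts] E.
rewrite IHt ?IHts // => x Hx; apply: E; by rewrite mem_tsvars_cons Hx ?orbT.
Qed.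

Lemma eq_Vals s1 s2 ts :
  {in tsvars ts, sd s1 =1 sd s2} -> Vals s1 ts = Vals s2 ts.
Proof.
elim: ts => //= t ts IH E.
rewrite (@eq_Val s1 s2) ?IH // => x Hx; apply: E; by rewrite mem_tsvars_cons Hx ?orbT.
Qed.

Lemma Val_defined s t d :
  Val s t = Some d -> forall x, x \in tvars t -> sd s x <> None.
Proof.
elim/term_ind_nested: t d => [x | f ts IH] d Ed y.
  by rewrite inE => /eqP ->; rewrite /= in Ed; rewrite Ed.
rewrite Val_TApp tvars_TApp in Ed *.
case Es: (Vals s ts) Ed => [ds|] //= _.
elim: ts ds IH Es => //= t ts IHts ds [IHt IHl].
case Et: (Val s t) => [d1|] //; case El: (Vals s ts) => [ds1|] // _.
by rewrite mem_tsvars_cons => /orP [/(IHt _ Et) | /(IHts _ IHl El)].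
Qed.

Lemma Vals_defined s ts ds :
  Vals s ts = Some ds -> forall x, x \in tsvars ts -> sd s x <> None.
Proof.
elim: ts ds => //= t ts IH ds.
case Et: (Val s t) => [d|] //; case El: (Vals s ts) => [ds1|] // _ x.
by rewrite mem_tsvars_cons => /orP [/(Val_defined Et) | /(IH _ El)].
Qed.

End Terms.

Section Assignments.
Variables (X : eqType) (F : Type).
Implicit Types (s : assignment X F) (l : seq X).

Definition dom_sub s l :=
  forall x, x \notin l -> sb s x = None /\ sd s x = None.

Definition empty_asg : assignment X F :=
  Assign (fun _ => None) (fun _ => None).

Definition single x b : assignment X F :=
  Assign (fun y => if y == x then Some b else None) (fun _ => None).

Definition restr s l : assignment X F :=
  Assign (fun y => if y \in l then sb s y else None)
         (fun y => if y \in l then sd s y else None).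

(* [dom_is_fv] forces the synchronisation part of an atom's witness to be empty. *)
Definition restr_data s l : assignment X F :=
  Assign (fun _ => None) (fun y => if y \in l then sd s y else None).

Lemma MFA_asub s' s :
  asub s' s -> MFA s -> forall x, sb s' x = Some false -> sd s' x = None.
Proof.
move=> [Sb Sd] Hmfa x /Sb Ex; case Ed: (sd s' x) => [d|] //.
have: sb s x = Some true by apply: Hmfa; rewrite (Sd _ _ Ed).
by rewrite Ex.
Qed.

Lemma compat_asub s s1 s2 : asub s1 s -> asub s2 s -> compat s1 s2.
Proof.
move=> [S1b S1d] [S2b S2d]; split=> x v1 v2 E1 E2.
  by move: (S1b _ _ E1) (S2b _ _ E2) => -> [].
by move: (S1d _ _ E1) (S2d _ _ E2) => -> [].
Qed.

Lemma asub_aunion s s1 s2 : asub s1 s -> asub s2 s -> asub (aunion s1 s2) s.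
Proof.
move=> [S1b S1d] [S2b S2d]; split=> x v /=.
  by case E: (sb s1 x) => [v1|] /=; [move=> [<-]; exact: S1b | exact: S2b].
by case E: (sd s1 x) => [v1|] /=; [move=> [<-]; exact: S1d | exact: S2d].
Qed.

Lemma dom_sub_aunion s1 s2 l1 l2 :
  dom_sub s1 l1 -> dom_sub s2 l2 -> dom_sub (aunion s1 s2) (l1 ++ l2).
Proof.
move=> D1 D2 x; rewrite mem_cat negb_or => /andP [/D1 [E1b E1d] /D2 [E2b E2d]].
by rewrite /= E1b E1d E2b E2d.
Qed.

Lemma dom_sub_catl s l1 l2 : dom_sub s l1 -> dom_sub s (l1 ++ l2).
Proof. by move=> D x; rewrite mem_cat negb_or => /andP [/D]. Qed.

Lemma dom_sub_catr s l1 l2 : dom_sub s l2 -> dom_sub s (l1 ++ l2).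
Proof. by move=> D x; rewrite mem_cat negb_or => /andP [_ /D]. Qed.

Lemma asub_single s x b : sb s x = Some b -> asub (single x b) s.
Proof. by move=> Ex; split=> // y v /=; case: eqP => // -> [<-]. Qed.

Lemma dom_sub_single x b : dom_sub (single x b) [:: x].
Proof. by move=> y /=; rewrite inE => /negbTE ->. Qed.

Lemma asub_restr s l : asub (restr s l) s.
Proof. by split=> y v /=; case: (y \in l). Qed.

Lemma dom_sub_restr s l : dom_sub (restr s l) l.
Proof. by move=> y /= /negbTE ->. Qed.

Lemma asub_restr_data s l : asub (restr_data s l) s.
Proof. by split=> y v //=; case: (y \in l). Qed.

Lemma dom_sub_restr_data s l : dom_sub (restr_data s l) l.
Proof. by move=> y /= /negbTE ->. Qed.

Lemma aunion_restr s l1 l2 :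
  dom_sub s (l1 ++ l2) -> aeq s (aunion (restr s l1) (restr s l2)).
Proof.
move=> D; split=> y /=; case: ifP => H1; case: ifP => H2 //=;
  by [case: (sb s y) | case: (sd s y)
     | case: (D y); rewrite // mem_cat H1 H2].
Qed.

Lemma is_empty_dom_sub_nil s : dom_sub s [::] -> is_empty s.
Proof. by move=> D; split=> y; case: (D y). Qed.

Lemma is_single_dom_sub1 s x b :
  dom_sub s [:: x] -> sb s x = Some b -> sd s x = None -> is_single x b s.
Proof.
move=> D Eb Ed; split=> y; case: (y =P x) => [-> //|/eqP ne];
  by case: (D y); rewrite // inE.
Qed.

Lemma dom_is_fv_restr_data s ts :
  (forall x, x \in tsvars ts -> sd s x <> None) ->
  dom_is_fv (restr_data s (tsvars ts)) ts.
Proof.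
move=> H; split=> // y /=.
by case: ifP => Hy; split=> // _; apply: H.
Qed.

Lemma Vals_restr_data s ts : Vals (restr_data s (tsvars ts)) ts = Vals s ts.
Proof. by apply: eq_Vals => x /= ->. Qed.

End Assignments.

Arguments empty_asg {X F}.
Arguments single {X F}.

Section Simplification.
Variables (X : eqType) (F P : Type) (I : interp F P).
Implicit Types (s : assignment X F) (psi : formula X F P).

Definition sub_witness s psi (sat : assignment X F -> Prop) :=
  exists s', asub s' s /\ dom_sub s' (Vlist psi) /\ sat s'.

Lemma simple_atom s p ts (b : bool) :
  (exists ds, Vals s ts = Some ds /\ I p ds = Some b) ->
  sub_witness s (FPred p ts) (fun s' =>
    (exists ds, Vals s' ts = Some ds /\ I p ds = Some b) /\ dom_is_fv s' ts).
Proof.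
move=> [ds [Eds Ip]]; exists (restr_data s (tsvars ts)).
split; first exact: asub_restr_data.
split; first exact: dom_sub_restr_data.
split; first by exists ds; rewrite Vals_restr_data.
exact/dom_is_fv_restr_data/(Vals_defined Eds).
Qed.

Lemma satP_dsatP_sub_witness psi : amp_free psi -> forall s,
  (satP I s psi -> sub_witness s psi (fun s' => satS I s' (toS true psi))) /\
  (dsatP I s psi -> sub_witness s psi (fun s' => dsatS I s' (toS false psi))).
Proof.
elim: psi => [|x|a IHa b IHb|//|a IHa|p ts] /= Hamp s.
- by split=> // _; exists empty_asg.
- split=> Ex; [exists (single x true) | exists (single x false)];
    by split; [exact: asub_single | split; [exact: dom_sub_single |]].
- case: Hamp => /IHa {}IHa /IHb {}IHb; split.
  + move=> [/(proj1 (IHa s)) [s1 [S1 [D1 H1]]] /(proj1 (IHb s)) [s2 [S2 [D2 H2]]]].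
    exists (aunion s1 s2); split; first exact: asub_aunion.
    split; first exact: dom_sub_aunion.
    by exists s1, s2; split; [exact: compat_asub S1 S2 | split].
  + move=> [/(proj2 (IHa s)) | /(proj2 (IHb s))] [s' [S' [D H]]]; exists s'.
      by split; [|split; [exact: dom_sub_catl | left]].
    by split; [|split; [exact: dom_sub_catr | right]].
- by case: (IHa Hamp s) => Hsat Hdsat; split=> [/Hdsat | /Hsat].
- by split; apply: simple_atom.
Qed.

Variable eqsym : P.
Hypothesis HI : eq_identity eqsym I.

Lemma I_eqsym_refl d : I eqsym [:: d; d] = Some true.
Proof. by case: (HI d d) => [[]|[_]]. Qed.

Lemma satS_EqSelf s x d :
  dom_sub s [:: x] -> sb s x = None -> sd s x = Some d ->
  satS I s (FEqSelf (F:=F) eqsym x).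
Proof.
move=> D Eb Ed; split; first by exists [:: d; d]; rewrite /= Ed I_eqsym_refl.
split=> y; rewrite /tsvars /= ?inE ?orbb; case: (y =P x) => [-> | /eqP ne].
- exact: Eb.
- by case: (D y); rewrite ?inE.
- by rewrite Ed.
- by case: (D y); rewrite ?inE // => _ ->.
Qed.

Lemma satS_SFAx s x :
  dom_sub s [:: x] -> (sb s x = Some false -> sd s x = None) ->
  satS I s (SFAx (F:=F) eqsym x).
Proof.
move=> D MFAx.
case Eb: (sb s x) => [[]|]; case Ed: (sd s x) => [d|].
- do 3 right; left.
  exists (single x true), (restr_data s [:: x]).
  split; first by split=> y v1 v2.
  split.
    split=> y /=; case: (y =P x) => [->|/eqP ne]; rewrite ?Eb ?inE ?eqxx //;
      by case: (D y); rewrite ?inE ?(negbTE ne) // => -> ->.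
  split; first by [].
  apply: (@satS_EqSelf _ x d); first exact: dom_sub_restr_data.
    by [].
  by rewrite /= inE eqxx.
- by right; left; apply: is_single_dom_sub1.
- by rewrite MFAx in Ed.
- by do 2 right; left; apply: is_single_dom_sub1.
- by do 4 right; apply: satS_EqSelf Ed.
- left; apply: is_empty_dom_sub_nil => y _.
  case: (y =P x) => [->|/eqP ne]; first by rewrite Eb Ed.
  by case: (D y); rewrite ?inE.
Qed.

Lemma satS_bigAnd_SFAx s l :
  dom_sub s l -> (forall x, sb s x = Some false -> sd s x = None) ->
  satS I s (bigAnd (map (SFAx (F:=F) eqsym) l)).
Proof.
case: l => [|a l] D MFAs; first exact: is_empty_dom_sub_nil D.
elim: l a s D MFAs => [|b l IH] a s D MFAs; first exact: satS_SFAx (MFAs a).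
exists (restr s [:: a]), (restr s (b :: l)).
split; first exact: compat_asub (asub_restr _ _) (asub_restr _ _).
split; first exact: aunion_restr.
split.
  apply: satS_SFAx; first exact: dom_sub_restr.
  by rewrite /= mem_head => /MFAs.
apply: IH; first exact: dom_sub_restr.
by move=> x /=; case: (x \in _) => // /MFAs.
Qed.

End Simplification.

Theorem mainTheorem6 (X : eqType) (F P : Type) (arF : F -> nat) (arP : P -> nat)
  (eqsym : P) (Harity : arP eqsym = 2)
  (I : interp F P) (HI : eq_identity eqsym I)
  (psi : formula X F P) (Hwf : wf_formula arF arP psi) (Hamp : amp_free psi)
  (sigma : assignment X F)
  (Hsigwf : forall x d, sd sigma x = Some d -> wf_gterm arF d)
  (Hsat : satP I sigma psi) (Hmfa : MFA sigma) :
  exists sigma' : assignment X F, asub sigma' sigma /\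
    satS I sigma' (FAmp (psiS psi) (SFA eqsym psi)).
Proof.
have [s' [S' [D Hs']]] := proj1 (satP_dsatP_sub_witness I Hamp sigma) Hsat.
exists s'; split=> //; split=> //.
apply: satS_bigAnd_SFAx (MFA_asub S' Hmfa) => // x.
by rewrite mem_undup; apply: D.
Qed.
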